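(* Let $X_1=\{(\alpha,\beta):\alpha\in(0,\pi/4],\ \beta\in[t(\alpha),\alpha]\}$ and $X_2=\{(\alpha,\beta):\alpha\in[\pi/4,\pi/2),\ \beta\in[0,\alpha]\}$. For all $(\alpha,\beta)\in X_1\cup X_2$, the competitive ratio of the $\beta$-Hedge algorithm with parameter $\beta$ (for half angle-of-view $\alpha$) equals $f_1(\alpha,\beta,r_0(\alpha,\beta))$.
   Context: Online drone coverage on a line. A drone has a fixed half angle-of-view $\alpha\in(0,\pi/2)$. A drone at a point $T=(t_x,t_y)$ with $t_y\ge 0$ covers the segment $[t_x-t_y\tan\alpha,\ t_x+t_y\tan\alpha]$ of the $x$-axis. For a point $X=(x,0)$ its feasibility cone is $\mathrm{FC}(X)=\{(u,v): v\ge 0,\ |u-x|\le v\tan\alpha\}$, and the feasibility cone of a finite set of points is the intersection of their cones. An input is a sequence $X_0=(0,0),X_1,\dots,X_n$ ($n\ge1$) of points $X_i=(x_i,0)$ revealed one at a time. A solution is a sequence of positions $P_0=(0,0),P_1,\dots,P_n$ with $P_i\in\mathrm{FC}(X_0,\dots,X_i)$; its cost is $\sum_i|P_iP_{i+1}|$. $\mathrm{OPT}$ is the minimum cost of a solution (input known in advance). A request $X_{i+1}$ is redundant if $x_{i+1}\in[\min_{j\le i}x_j,\max_{j\le i}x_j]$. An input is good if it has no redundant requests, $\min_j x_j=-1$ and $\max_j x_j\in[0,1]$. The competitive ratio is the supremum over good inputs of the algorithm's cost divided by $\mathrm{OPT}$. The $\beta$-Hedge algorithm with parameter $\beta\in[0,\alpha]$: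 if $P_{i-1}\in\mathrm{FC}(X_0,\dots,X_i)$ then $P_i=P_{i-1}$; otherwise the drone moves from $P_{i-1}$ along the ray with direction $(\operatorname{sgn}(x_i)\sin\beta,\cos\beta)$, and $P_i$ is the first point of this ray in $\mathrm{FC}(X_0,\dots,X_i)$. $f_1(\alpha,\beta,r)=\frac{2\sin\alpha}{\cos\beta(\tan\alpha+\tan\beta)}\cdot\frac{1+\frac{2\tan\beta}{\tan\alpha+\tan\beta}r}{\sqrt{1+r^2+2\cos(2\alpha)r}}$; with $A=\frac{2\tan\beta}{\tan\alpha+\tan\beta}$, $B=2\cos(2\alpha)$, $r_0(\alpha,\beta)=\frac{2A-B}{2-AB}$; and $t(\alpha)=\arctan\!\left(\frac{\sin(3\alpha)-\sin\alpha}{3\cos\alpha-\cos(3\alpha)}\right)$. *)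

From Stdlib Require Import Reals Lra.
Open Scope R_scope.

Definition pt := (R * R)%type.

Definition dist (p q : pt) : R :=
  sqrt ((fst p - fst q) ^ 2 + (snd p - snd q) ^ 2).

(* Feasibility cone of the point X = (x,0) for half angle-of-view alpha. *)
Definition inFC (alpha x : R) (p : pt) : Prop :=
  0 <= snd p /\ Rabs (fst p - x) <= snd p * tan alpha.

Definition inFC_upto (alpha : R) (x : nat -> R) (i : nat) (p : pt) : Prop :=
  forall j, (j <= i)%nat -> inFC alpha (x j) p.

Fixpoint path_cost (P : nat -> pt) (n : nat) : R :=
  match n with
  | O => 0
  | S k => path_cost P k + dist (P k) (P (S k))
  end.

(* An input is x_0, ..., x_n (values beyond n are irrelevant). *)
Definition good_input (n : nat) (x : nat -> R) : Prop :=
  (1 <= n)%nat /\ x O = 0 /\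
  (forall i, (1 <= i <= n)%nat ->
     ~ (exists a b, (a < i)%nat /\ (b < i)%nat /\ x a <= x i <= x b)) /\
  ((forall j, (j <= n)%nat -> -1 <= x j) /\ (exists j, (j <= n)%nat /\ x j = -1)) /\
  (exists M, 0 <= M <= 1 /\
     (forall j, (j <= n)%nat -> x j <= M) /\ (exists j, (j <= n)%nat /\ x j = M)).

Definition solution (alpha : R) (n : nat) (x : nat -> R) (P : nat -> pt) : Prop :=
  P O = (0, 0) /\ forall i, (i <= n)%nat -> inFC_upto alpha x i (P i).

Definition is_glb (E : R -> Prop) (m : R) : Prop :=
  (forall c, E c -> m <= c) /\ (forall b, (forall c, E c -> b <= c) -> b <= m).

Definition is_OPT (alpha : R) (n : nat) (x : nat -> R) (opt : R) : Prop :=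
  is_glb (fun c => exists P, solution alpha n x P /\ c = path_cost P n) opt.

Definition sgn (r : R) : R :=
  if Rlt_dec 0 r then 1 else if Rlt_dec r 0 then -1 else 0.

Definition hedge_move (beta xi : R) (p : pt) (s : R) : pt :=
  (fst p + s * (sgn xi * sin beta), snd p + s * cos beta).

Definition hedge_traj (alpha beta : R) (n : nat) (x : nat -> R) (P : nat -> pt) : Prop :=
  P O = (0, 0) /\
  forall k, (S k <= n)%nat ->
    (inFC_upto alpha x (S k) (P k) -> P (S k) = P k) /\
    (~ inFC_upto alpha x (S k) (P k) ->
       exists s, 0 <= s /\ P (S k) = hedge_move beta (x (S k)) (P k) s /\
         inFC_upto alpha x (S k) (P (S k)) /\
         (forall s', 0 <= s' < s ->
            ~ inFC_upto alpha x (S k) (hedge_move beta (x (S k)) (P k) s'))).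

Definition hedge_ratios (alpha beta : R) (r : R) : Prop :=
  exists n x P opt, good_input n x /\ hedge_traj alpha beta n x P /\
    is_OPT alpha n x opt /\ r = path_cost P n / opt.

Definition hedge_competitive_ratio (alpha beta c : R) : Prop :=
  is_lub (hedge_ratios alpha beta) c.

Definition f1 (alpha beta r : R) : R :=
  2 * sin alpha / (cos beta * (tan alpha + tan beta)) *
  ((1 + 2 * tan beta / (tan alpha + tan beta) * r) /
   sqrt (1 + r ^ 2 + 2 * cos (2 * alpha) * r)).

Definition r0 (alpha beta : R) : R :=
  let A := 2 * tan beta / (tan alpha + tan beta) in
  let B := 2 * cos (2 * alpha) in
  (2 * A - B) / (2 - A * B).

Definition t_fun (alpha : R) : R :=
  atan ((sin (3 * alpha) - sin alpha) / (3 * cos alpha - cos (3 * alpha))).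

From Stdlib Require Import Reals Lra Lia Psatz Rgeom.
Open Scope R_scope.

(* Track the segment [[a, b]] of the x-axis seen by the drone.  A Hedge move of length [s]
   towards a new request pushes the near end of [[a, b]] out by [s * lead_rate] and the far
   end by [s * trail_rate = k * s * lead_rate], while the height grows by [s * cos beta]; so
   the cost of Hedge is its final height over [cos beta], i.e. proportional to [b - a].  An
   invariant relating [[a, b]] to the hull [[-1, M]] of the requests ([hedge_inv]) bounds
   [b - a], giving cost at most [(1 + A M) / lead_rate].  A solution ends at a point seeing
   [[-l, r]] with [l >= 1], [r >= M], at distance [sqrt (l^2 + r^2 + B l r) / (2 sin alpha)]
   from the origin, which bounds OPT from below.  The resulting ratio is maximal at [M = r0],
   and the inputs [0, r0, -1] (or [0, -1] when [r0 = 0]) attain it; the hypothesis on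
   [(alpha, beta)] amounts to [r0 >= 0]. *)

Lemma Rabs_le_inv y c : Rabs y <= c -> - c <= y <= c.
Proof.
  intros H. pose proof (Rle_abs y). pose proof (Rle_abs (- y)).
  rewrite Rabs_Ropp in *. lra.
Qed.

Lemma Rdiv_le_0_compat a b : 0 <= a -> 0 < b -> 0 <= a / b.
Proof. intros Ha Hb. apply Rmult_le_pos; [exact Ha | left; apply Rinv_0_lt_compat, Hb]. Qed.

Lemma dist_self p : dist p p = 0.
Proof. unfold dist. rewrite !Rminus_diag, pow_i, Rplus_0_r by lia. apply sqrt_0. Qed.

Lemma dist_triangle p q r : dist p r <= dist p q + dist q r.
Proof.
  unfold dist. pose proof (triangle (fst p) (snd p) (fst r) (snd r) (fst q) (snd q)) as H.
  unfold dist_euc in H. rewrite !Rsqr_pow2 in H. exact H.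
Qed.

Lemma path_cost_ge_dist P n : dist (P O) (P n) <= path_cost P n.
Proof.
  induction n as [|n IH]; simpl.
  - rewrite dist_self. lra.
  - pose proof (dist_triangle (P O) (P n) (P (S n))). lra.
Qed.

Lemma glb_ratio_le (E : R -> Prop) opt a F :
  is_glb E opt -> 0 < a -> 0 < F -> (forall c, E c -> a <= F * c) -> a / opt <= F.
Proof.
  intros [_ Hglb] Ha HF Hlow.
  assert (Hopt : a / F <= opt).
  { apply Hglb. intros c Hc. specialize (Hlow c Hc).
    apply (Rmult_le_reg_l F); [lra|]. field_simplify; lra. }
  assert (0 < a / F) by (apply Rdiv_lt_0_compat; lra).
  assert (a <= F * opt).
  { apply (Rmult_le_compat_l F) in Hopt; [|lra].
    replace (F * (a / F)) with a in Hopt by (field; lra). exact Hopt. }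
  apply (Rmult_le_reg_r opt); [lra|].
  replace (a / opt * opt) with a by (field; lra). lra.
Qed.

Definition cone_form (B l r : R) : R := l ^ 2 + r ^ 2 + B * l * r.

Lemma cone_form_sum_squares B l r :
  4 * cone_form B l r = (2 + B) * (l + r) ^ 2 + (2 - B) * (l - r) ^ 2.
Proof. unfold cone_form. ring. Qed.

Lemma cone_form_nonneg B l r : -2 <= B <= 2 -> 0 <= cone_form B l r.
Proof.
  intros HB. pose proof (cone_form_sum_squares B l r).
  assert (0 <= (2 + B) * (l + r) ^ 2) by (apply Rmult_le_pos; [lra | apply pow2_ge_0]).
  assert (0 <= (2 - B) * (l - r) ^ 2) by (apply Rmult_le_pos; [lra | apply pow2_ge_0]).
  lra.
Qed.

Lemma cone_form_1_pos B r : -2 < B < 2 -> 0 < cone_form B 1 r.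
Proof.
  intros HB. pose proof (cone_form_sum_squares B 1 r).
  assert (0 <= (2 + B) * (1 + r) ^ 2) by (apply Rmult_le_pos; [lra | apply pow2_ge_0]).
  assert (0 <= (2 - B) * (1 - r) ^ 2) by (apply Rmult_le_pos; [lra | apply pow2_ge_0]).
  destruct (Rle_lt_dec 0 r); nra.
Qed.

Lemma cone_form_le B M l r : -2 <= B <= 2 -> 0 <= M <= 1 -> 0 <= 2 * M + B ->
  1 <= l -> M <= r -> cone_form B 1 M <= cone_form B l r.
Proof.
  intros HB HM HMB Hl Hr. unfold cone_form.
  replace l with (1 + (l - 1)) by ring. replace r with (M + (r - M)) by ring.
  set (d := l - 1). set (e := r - M).
  assert (0 <= d * (2 + B * M)) by (apply Rmult_le_pos; unfold d; nra).
  assert (0 <= e * (2 * M + B)) by (apply Rmult_le_pos; unfold e; lra).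
  pose proof (cone_form_nonneg B d e HB). unfold cone_form in *. nra.
Qed.

(* [r0] maximises [r |-> (l + A r) / sqrt (cone_form B l r)] at [r = r0 l]: indeed
   [(1 + A r0)^2 cone_form B l r - (l + A r)^2 cone_form B 1 r0 = (1 + A^2 - A B) (r - r0 l)^2]. *)
Lemma cone_form_ratio_le A B r0 M l r :
  0 <= A <= 1 -> -2 <= B <= 2 -> 0 < 2 - A * B -> r0 * (2 - A * B) = 2 * A - B ->
  0 <= r0 -> 0 <= M <= r -> 1 <= l ->
  (1 + A * M) * sqrt (cone_form B 1 r0) <= (1 + A * r0) * sqrt (cone_form B l r).
Proof.
  intros HA HB HAB Hr0 Hr0pos HM Hl.
  assert (E : (1 + A * r0) ^ 2 * cone_form B l r - (l + A * r) ^ 2 * cone_form B 1 r0 =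
              (1 + A ^ 2 - A * B) * (r - r0 * l) ^ 2).
  { unfold cone_form.
    replace r0 with ((2 * A - B) / (2 - A * B)) by (field_simplify_eq; lra).
    field. lra. }
  assert (0 <= (1 + A ^ 2 - A * B) * (r - r0 * l) ^ 2).
  { apply Rmult_le_pos; [nra | apply pow2_ge_0]. }
  pose proof (cone_form_nonneg B 1 r0 HB). pose proof (cone_form_nonneg B l r HB).
  assert (Hlin : 0 <= 1 + A * M <= l + A * r) by nra.
  assert ((1 + A * M) ^ 2 <= (l + A * r) ^ 2) by (apply pow_incr; lra).
  assert ((1 + A * M) ^ 2 * cone_form B 1 r0 <= (1 + A * r0) ^ 2 * cone_form B l r).
  { apply Rle_trans with ((l + A * r) ^ 2 * cone_form B 1 r0); [| lra].
    apply Rmult_le_compat_r; assumption. }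
  assert (0 <= 1 + A * r0) by nra.
  rewrite <- (sqrt_pow2 (1 + A * M)), <- (sqrt_pow2 (1 + A * r0)) by lra.
  rewrite <- !sqrt_mult by (apply pow2_ge_0 || assumption).
  apply sqrt_le_1_alt. assumption.
Qed.

Lemma r0_bounds A B r0 : 0 <= A <= 1 -> -2 < B < 2 -> B <= 2 * A ->
  r0 * (2 - A * B) = 2 * A - B ->
  0 <= r0 <= 1 /\ 0 <= 2 * r0 + B /\ (1 - A) * r0 < 1.
Proof.
  intros HA HB HBA Hr0.
  assert (HAB : 0 < 2 - A * B) by (destruct (Rle_lt_dec 0 B); nra).
  assert (0 <= r0) by (apply (Rmult_le_reg_r (2 - A * B)); lra).
  assert (r0 <= 1) by (apply (Rmult_le_reg_r (2 - A * B)); nra).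
  assert (0 <= 2 * r0 + B).
  { apply (Rmult_le_reg_r (2 - A * B)); [lra |].
    replace ((2 * r0 + B) * (2 - A * B)) with (A * (4 - B * B)) by lra.
    rewrite Rmult_0_l. apply Rmult_le_pos; nra. }
  repeat split; try lra.
  destruct (Req_dec A 0) as [-> | HA0]; nra.
Qed.

(* [a, b] is the interval seen by the drone and [-l, r] the hull of the requests so far. *)
Definition hedge_inv (k a b l r : R) : Prop :=
  a <= - l /\ r <= b /\ 0 <= l /\ 0 <= r /\ 0 <= b + k * a /\ 0 <= - a - k * b /\
  b - r <= k * Rmax 0 (l - k * r) /\ - a - l <= k * Rmax 0 (r - k * l) /\
  (b = r \/ a = - l).

Section HedgeInvariant.

Variable k : R.
Hypothesis Hk : 0 <= k <= 1.

Lemma hedge_inv_0 : hedge_inv k 0 0 0 0.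
Proof.
  unfold hedge_inv, Rmax. destruct (Rle_dec 0 (0 - k * 0)); repeat split; lra.
Qed.

Lemma hedge_inv_mirror a b l r : hedge_inv k a b l r -> hedge_inv k (- b) (- a) r l.
Proof.
  intros (H1 & H2 & H3 & H4 & H5 & H6 & H7 & H8 & H9).
  repeat split; lra.
Qed.

Lemma hedge_inv_grow_right a b l r r' : hedge_inv k a b l r -> r < r' -> b < r' ->
  hedge_inv k (a - k * (r' - b)) r' l r'.
Proof.
  intros (H1 & H2 & H3 & H4 & H5 & H6 & H7 & H8 & H9) Hr Hb.
  pose proof (Rmax_l 0 (l - k * r')). pose proof (Rmax_l 0 (r' - k * l)).
  assert (0 <= (1 - k * k) * (r' - b)) by (apply Rmult_le_pos; nra).
  repeat split; try nra.
  destruct H9 as [-> | ->]; revert H8; unfold Rmax;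
    destruct (Rle_dec 0 (r - k * l)), (Rle_dec 0 (r' - k * l)); intros; nra.
Qed.

Lemma hedge_inv_extend_right a b l r r' : hedge_inv k a b l r -> r < r' -> r' <= b ->
  hedge_inv k a b l r'.
Proof.
  intros (H1 & H2 & H3 & H4 & H5 & H6 & H7 & H8 & H9) Hr Hb.
  destruct H9 as [E | E]; [lra |].
  assert (0 <= (1 - k * k) * (r' - r)) by (apply Rmult_le_pos; nra).
  assert (0 <= k * k * (r' - r)) by (apply Rmult_le_pos; nra).
  pose proof (Rmax_l 0 (r' - k * l)).
  repeat split; try nra.
  revert H7. unfold Rmax.
  destruct (Rle_dec 0 (l - k * r)), (Rle_dec 0 (l - k * r')); intros; nra.
Qed.

Lemma hedge_inv_grow_left a b l r l' : hedge_inv k a b l r -> l < l' -> - l' < a ->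
  hedge_inv k (- l') (b + k * (a + l')) l' r.
Proof.
  intros H Hl Ha.
  apply hedge_inv_mirror, hedge_inv_grow_right with (r' := l') in H; [| lra | lra].
  apply hedge_inv_mirror in H.
  replace (b + k * (a + l')) with (- (- b - k * (l' - - a))) by ring.
  exact H.
Qed.

Lemma hedge_inv_extend_left a b l r l' : hedge_inv k a b l r -> l < l' -> a <= - l' ->
  hedge_inv k a b l' r.
Proof.
  intros H Hl Ha.
  apply hedge_inv_mirror, hedge_inv_extend_right with (r' := l') in H; [| lra | lra].
  apply hedge_inv_mirror in H. rewrite !Ropp_involutive in H. exact H.
Qed.

Lemma hedge_inv_width a b M : M <= 1 -> hedge_inv k a b 1 M ->
  b - a <= (1 + k) * (1 + (1 - k) * M).
Proof.
  intros HM (H1 & H2 & H3 & H4 & H5 & H6 & H7 & H8 & H9).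
  revert H7 H8. unfold Rmax.
  destruct (Rle_dec 0 (1 - k * M)), (Rle_dec 0 (M - k * 1)); intros;
    destruct H9; subst; nra.
Qed.

End HedgeInvariant.

Fixpoint xmin (x : nat -> R) (i : nat) : R :=
  match i with O => x O | S j => Rmin (xmin x j) (x (S j)) end.

Fixpoint xmax (x : nat -> R) (i : nat) : R :=
  match i with O => x O | S j => Rmax (xmax x j) (x (S j)) end.

Lemma xmin_spec x i :
  (forall j, (j <= i)%nat -> xmin x i <= x j) /\ exists j, (j <= i)%nat /\ x j = xmin x i.
Proof.
  induction i as [| i [Hle [j0 [Hj0 Ej0]]]]; simpl.
  - split; [intros j Hj; replace j with O by lia; lra | exists O; auto].
  - unfold Rmin. destruct (Rle_dec (xmin x i) (x (S i))).
    + split; [| exists j0; split; [lia | auto]].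
      intros j Hj. destruct (Nat.eq_dec j (S i)) as [-> | ]; [lra | apply Hle; lia].
    + split; [| exists (S i); auto].
      intros j Hj. destruct (Nat.eq_dec j (S i)) as [-> | ]; [lra |].
      specialize (Hle j ltac:(lia)). lra.
Qed.

Lemma xmax_spec x i :
  (forall j, (j <= i)%nat -> x j <= xmax x i) /\ exists j, (j <= i)%nat /\ x j = xmax x i.
Proof.
  induction i as [| i [Hle [j0 [Hj0 Ej0]]]]; simpl.
  - split; [intros j Hj; replace j with O by lia; lra | exists O; auto].
  - unfold Rmax. destruct (Rle_dec (xmax x i) (x (S i))).
    + split; [| exists (S i); auto].
      intros j Hj. destruct (Nat.eq_dec j (S i)) as [-> | ]; [lra |].
      specialize (Hle j ltac:(lia)). lra.
    + split; [| exists j0; split; [lia | auto]].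
      intros j Hj. destruct (Nat.eq_dec j (S i)) as [-> | ]; [lra | apply Hle; lia].
Qed.

Lemma xmin_le_0 x i : x O = 0 -> xmin x i <= 0.
Proof. intros H. rewrite <- H. apply xmin_spec. lia. Qed.

Lemma xmax_ge_0 x i : x O = 0 -> 0 <= xmax x i.
Proof. intros H. rewrite <- H. apply xmax_spec. lia. Qed.

Lemma good_input_new_extreme n x k : good_input n x -> (S k <= n)%nat ->
  x (S k) < xmin x k \/ xmax x k < x (S k).
Proof.
  intros (_ & _ & Hnr & _) Hk.
  destruct (xmin_spec x k) as [_ [jm [Hjm Ejm]]], (xmax_spec x k) as [_ [jM [HjM EjM]]].
  destruct (Rlt_le_dec (x (S k)) (xmin x k)) as [| Hlo]; [left; auto |].
  destruct (Rlt_le_dec (xmax x k) (x (S k))) as [| Hhi]; [right; auto |].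
  exfalso. apply (Hnr (S k)); [lia |]. exists jm, jM. repeat split; lia || lra.
Qed.

Lemma good_input_hull n x : good_input n x -> xmin x n = -1 /\ 0 <= xmax x n <= 1.
Proof.
  intros (_ & Hx0 & _ & [Hlo [j1 [Hj1 E1]]] & [M [HM [Hhi [j2 [Hj2 E2]]]]]).
  destruct (xmin_spec x n) as [Smin [j [Hj Ej]]], (xmax_spec x n) as [Smax [j' [Hj' Ej']]].
  specialize (Smin j1 Hj1). specialize (Hlo j Hj).
  specialize (Smax j2 Hj2). specialize (Hhi j' Hj').
  pose proof (xmax_ge_0 x n Hx0). lra.
Qed.

Definition lend (alpha : R) (p : pt) : R := fst p - snd p * tan alpha.
Definition rend (alpha : R) (p : pt) : R := fst p + snd p * tan alpha.

Lemma ends_origin alpha : lend alpha (0, 0) = 0 /\ rend alpha (0, 0) = 0.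
Proof. unfold lend, rend; cbn [fst snd]. split; ring. Qed.

Definition covers (alpha lo hi : R) (p : pt) : Prop :=
  0 <= snd p /\ lend alpha p <= lo /\ hi <= rend alpha p.

Lemma inFC_covers alpha y p : inFC alpha y p <-> covers alpha y y p.
Proof.
  unfold inFC, covers, lend, rend. split.
  - intros [Hv Hx]. apply Rabs_le_inv in Hx. lra.
  - intros (Hv & Hl & Hr). split; [lra | apply Rabs_le; lra].
Qed.

Lemma inFC_upto_covers alpha x i p :
  inFC_upto alpha x i p <-> covers alpha (xmin x i) (xmax x i) p.
Proof.
  destruct (xmin_spec x i) as [Smin [jm [Hjm Ejm]]], (xmax_spec x i) as [Smax [jM [HjM EjM]]].
  unfold inFC_upto. split.
  - intros H.
    destruct (proj1 (inFC_covers alpha (x jm) p) (H jm Hjm)) as (Hv & Hl & _).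
    destruct (proj1 (inFC_covers alpha (x jM) p) (H jM HjM)) as (_ & _ & Hr).
    rewrite <- Ejm, <- EjM. repeat split; assumption.
  - intros (Hv & Hl & Hr) j Hj. apply inFC_covers.
    specialize (Smin j Hj). specialize (Smax j Hj). repeat split; lra.
Qed.

Definition lead_rate (alpha beta : R) : R := sin beta + tan alpha * cos beta.
Definition trail_rate (alpha beta : R) : R := tan alpha * cos beta - sin beta.
Definition trail_ratio (alpha beta : R) : R := trail_rate alpha beta / lead_rate alpha beta.

Definition Acoef (alpha beta : R) : R := 2 * tan beta / (tan alpha + tan beta).
Definition Bcoef (alpha : R) : R := 2 * cos (2 * alpha).

(* The clause of [hedge_traj] for one request: [hedge_traj] unfolds to it. *)
Definition hedge_step (beta : R) (F : pt -> Prop) (y : R) (p p' : pt) : Prop :=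
  (F p -> p' = p) /\
  (~ F p -> exists s, 0 <= s /\ p' = hedge_move beta y p s /\ F p' /\
     (forall s', 0 <= s' < s -> ~ F (hedge_move beta y p s'))).

Lemma hedge_step_stay beta F y p p' : F p -> (hedge_step beta F y p p' <-> p' = p).
Proof.
  intros Hp. split; [intros [H _]; auto |].
  intros ->. split; [auto | contradiction].
Qed.

Lemma hedge_step_threshold beta F y p p' d rate : ~ F p -> 0 <= d -> 0 < rate ->
  (forall s, 0 <= s -> (F (hedge_move beta y p s) <-> d <= s * rate)) ->
  (hedge_step beta F y p p' <-> p' = hedge_move beta y p (d / rate)).
Proof.
  intros Hp Hd Hrate HF.
  assert (Hs0 : 0 <= d / rate) by (apply Rdiv_le_0_compat; assumption).
  assert (Hthr : forall s, 0 <= s -> (F (hedge_move beta y p s) <-> d / rate <= s)).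
  { intros s Hs. rewrite (HF s Hs). split; intros H.
    - apply (Rmult_le_reg_r rate); [exact Hrate |]. field_simplify; lra.
    - apply (Rmult_le_compat_r rate) in H; [| lra]. field_simplify in H; lra. }
  split.
  - intros [_ Hmove]. destruct (Hmove Hp) as (s & Hs & -> & Hfeas & Hfirst).
    f_equal. apply (Hthr s Hs) in Hfeas.
    destruct (Rle_lt_or_eq_dec _ _ Hfeas) as [Hlt | Heq]; [| auto].
    exfalso. apply (Hfirst (d / rate)); [lra |]. apply Hthr; lra.
  - intros ->. split; [contradiction |]. intros _.
    exists (d / rate). repeat split; [lra | apply Hthr; lra |].
    intros s' Hs' Hfeas. apply Hthr in Hfeas; lra.
Qed.

Lemma sgn_pos r : 0 < r -> sgn r = 1.
Proof. intros H. unfold sgn. destruct (Rlt_dec 0 r); lra. Qed.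

Lemma sgn_neg r : r < 0 -> sgn r = -1.
Proof. intros H. unfold sgn. destruct (Rlt_dec 0 r), (Rlt_dec r 0); lra. Qed.

Lemma dist_hedge_move beta y p s : y <> 0 -> 0 <= s -> dist p (hedge_move beta y p s) = s.
Proof.
  intros Hy Hs. unfold dist, hedge_move; cbn [fst snd].
  assert (Hsgn : sgn y ^ 2 = 1).
  { destruct (Rlt_dec 0 y); [rewrite sgn_pos by lra | rewrite sgn_neg by lra]; ring. }
  pose proof (sin2_cos2 beta) as Hsc. unfold Rsqr in Hsc.
  replace ((fst p - (fst p + s * (sgn y * sin beta))) ^ 2 +
           (snd p - (snd p + s * cos beta)) ^ 2)
    with (s ^ 2 * (sgn y ^ 2 * (sin beta * sin beta) + cos beta * cos beta)) by ring.
  rewrite Hsgn, Rmult_1_l, Hsc, Rmult_1_r. apply sqrt_pow2, Hs.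
Qed.

Lemma ends_hedge_move_right alpha beta y p s : 0 < y ->
  lend alpha (hedge_move beta y p s) = lend alpha p - s * trail_rate alpha beta /\
  rend alpha (hedge_move beta y p s) = rend alpha p + s * lead_rate alpha beta.
Proof.
  intros Hy. unfold lend, rend, hedge_move, lead_rate, trail_rate; cbn [fst snd].
  rewrite sgn_pos by exact Hy. split; ring.
Qed.

Lemma ends_hedge_move_left alpha beta y p s : y < 0 ->
  lend alpha (hedge_move beta y p s) = lend alpha p - s * lead_rate alpha beta /\
  rend alpha (hedge_move beta y p s) = rend alpha p + s * trail_rate alpha beta.
Proof.
  intros Hy. unfold lend, rend, hedge_move, lead_rate, trail_rate; cbn [fst snd].
  rewrite sgn_neg by exact Hy. split; ring.
Qed.

Definition apex (alpha lo hi : R) : pt := ((lo + hi) / 2, (hi - lo) / (2 * tan alpha)).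

Definition jump_path (q : pt) (j : nat) : pt := match j with O => (0, 0) | S _ => q end.

Lemma path_cost_jump_path q m : path_cost (jump_path q) (S m) = dist (0, 0) q.
Proof.
  induction m as [| m IH]; [simpl; ring |].
  change (path_cost (jump_path q) (S (S m)))
    with (path_cost (jump_path q) (S m) + dist q q).
  rewrite IH, dist_self. ring.
Qed.

Lemma solution_sees_request alpha n x Q j : solution alpha n x Q -> (j <= n)%nat ->
  lend alpha (Q n) <= x j <= rend alpha (Q n).
Proof.
  intros [_ HQ] Hj. specialize (HQ n (le_n n) j Hj).
  apply inFC_covers in HQ as (_ & Hl & Hr). lra.
Qed.

Section ConeGeometry.

Variable alpha : R.
Hypothesis Halpha : 0 < alpha < PI / 2.

Lemma cone_trig_signs : 0 < sin alpha /\ 0 < cos alpha /\ 0 < tan alpha.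
Proof.
  pose proof PI_RGT_0.
  assert (0 < sin alpha) by (apply sin_gt_0; lra).
  assert (0 < cos alpha) by (apply cos_gt_0; lra).
  repeat split; try lra. unfold tan. apply Rdiv_lt_0_compat; lra.
Qed.

Lemma Bcoef_bounds : -2 < Bcoef alpha < 2.
Proof.
  destruct cone_trig_signs as (Hsa & Hca & _).
  pose proof (sin2_cos2 alpha) as E. unfold Rsqr in E.
  unfold Bcoef. rewrite cos_2a_sin. split; nra.
Qed.

Lemma snd_nonneg_of_lend_le_rend p : lend alpha p <= rend alpha p -> 0 <= snd p.
Proof.
  destruct cone_trig_signs as (_ & _ & Hta).
  unfold lend, rend. intros H. nra.
Qed.

Lemma dist_origin_cone_form p :
  2 * sin alpha * dist (0, 0) p = sqrt (cone_form (Bcoef alpha) (- lend alpha p) (rend alpha p)).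
Proof.
  destruct cone_trig_signs as (Hsa & Hca & _).
  pose proof (sin2_cos2 alpha) as E. unfold Rsqr in E.
  replace (cone_form (Bcoef alpha) (- lend alpha p) (rend alpha p))
    with ((2 * sin alpha) ^ 2 * ((0 - fst p) ^ 2 + (0 - snd p) ^ 2)).
  - unfold dist; cbn [fst snd].
    rewrite sqrt_mult, sqrt_pow2 by (lra || nra). reflexivity.
  - unfold cone_form, Bcoef, lend, rend, tan. rewrite cos_2a_sin.
    field_simplify_eq; [| lra].
    replace (cos alpha ^ 2) with (1 - sin alpha ^ 2) by nra. ring.
Qed.

Lemma ends_apex lo hi : lend alpha (apex alpha lo hi) = lo /\ rend alpha (apex alpha lo hi) = hi.
Proof.
  destruct cone_trig_signs as (_ & _ & Hta).
  unfold lend, rend, apex; cbn [fst snd]. split; field; lra.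
Qed.

Lemma solution_cost_ge n x Q : solution alpha n x Q ->
  sqrt (cone_form (Bcoef alpha) (- lend alpha (Q n)) (rend alpha (Q n))) <=
  2 * sin alpha * path_cost Q n.
Proof.
  intros HQ. destruct cone_trig_signs as (Hsa & _).
  rewrite <- dist_origin_cone_form.
  pose proof (path_cost_ge_dist Q n) as Hc. destruct HQ as [HQ0 _]. rewrite HQ0 in Hc.
  apply Rmult_le_compat_l; lra.
Qed.

Lemma good_input_OPT n x : good_input n x -> 0 <= 2 * xmax x n + Bcoef alpha ->
  is_OPT alpha n x (sqrt (cone_form (Bcoef alpha) 1 (xmax x n)) / (2 * sin alpha)).
Proof.
  intros Hg HMB. pose proof Hg as (Hn & Hx0 & _).
  destruct (good_input_hull n x Hg) as [Emin HM].
  destruct (xmin_spec x n) as [Smin [jm [Hjm Ejm]]], (xmax_spec x n) as [Smax [jM [HjM EjM]]].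
  destruct cone_trig_signs as (Hsa & _ & Hta). pose proof Bcoef_bounds as HB.
  set (M := xmax x n) in *.
  destruct (ends_apex (-1) M) as [Elo Ehi].
  split.
  - intros c [Q [HQ ->]].
    pose proof (solution_sees_request alpha n x Q jm HQ Hjm).
    pose proof (solution_sees_request alpha n x Q jM HQ HjM).
    apply (Rmult_le_reg_l (2 * sin alpha)); [lra |].
    replace (2 * sin alpha * (sqrt (cone_form (Bcoef alpha) 1 M) / (2 * sin alpha)))
      with (sqrt (cone_form (Bcoef alpha) 1 M)) by (field; lra).
    eapply Rle_trans; [| apply (solution_cost_ge n x Q HQ)].
    apply sqrt_le_1_alt, cone_form_le; lra.
  - intros b Hb. apply Hb. exists (jump_path (apex alpha (-1) M)). split.
    + split; [reflexivity |]. intros i Hi j Hj. apply inFC_covers.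
      destruct i as [| i]; cbn [jump_path].
      * replace j with O by lia. rewrite Hx0.
        unfold covers, lend, rend; cbn [fst snd]. repeat split; lra.
      * specialize (Smin j ltac:(lia)). specialize (Smax j ltac:(lia)).
        unfold covers. rewrite Elo, Ehi. unfold apex; cbn [snd].
        repeat split; [apply Rdiv_le_0_compat | |]; lra.
    + destruct n as [| m]; [lia |]. rewrite path_cost_jump_path.
      apply (Rmult_eq_reg_l (2 * sin alpha)); [| lra].
      rewrite dist_origin_cone_form, Elo, Ehi. replace (- -1) with 1 by ring. field. lra.
Qed.

End ConeGeometry.

Section HedgeGeometry.

Variables alpha beta : R.
Hypothesis Halpha : 0 < alpha < PI / 2.
Hypothesis Hbeta : 0 <= beta <= alpha.

Lemma hedge_trig_signs :
  0 < sin alpha /\ 0 < cos alpha /\ 0 < tan alpha /\ 0 <= sin beta /\ 0 < cos beta /\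
  sin beta * cos alpha <= sin alpha * cos beta.
Proof.
  pose proof PI_RGT_0. pose proof (cone_trig_signs alpha Halpha).
  pose proof (sin_ge_0 (alpha - beta) ltac:(lra) ltac:(lra)) as Hdiff.
  rewrite sin_minus in Hdiff.
  repeat split; try lra.
  - apply sin_ge_0; lra.
  - apply cos_gt_0; lra.
Qed.

Lemma hedge_rates :
  0 < lead_rate alpha beta /\ 0 <= trail_rate alpha beta /\
  0 <= trail_ratio alpha beta <= 1.
Proof.
  destruct hedge_trig_signs as (Hsa & Hca & Hta & Hsb & Hcb & Hsc).
  assert (Hq : 0 <= trail_rate alpha beta).
  { replace (trail_rate alpha beta)
      with ((sin alpha * cos beta - sin beta * cos alpha) / cos alpha)
      by (unfold trail_rate, tan; field; lra).
    apply Rdiv_le_0_compat; lra. }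
  assert (Hp : 0 < lead_rate alpha beta) by (unfold lead_rate; nra).
  assert (trail_rate alpha beta <= lead_rate alpha beta)
    by (unfold trail_rate, lead_rate; lra).
  unfold trail_ratio. repeat split; auto.
  - apply Rdiv_le_0_compat; lra.
  - apply (Rmult_le_reg_r (lead_rate alpha beta)); [lra |].
    field_simplify; lra.
Qed.

Lemma Acoef_trail_ratio : Acoef alpha beta = 1 - trail_ratio alpha beta.
Proof.
  destruct hedge_trig_signs as (_ & _ & Hta & Hsb & Hcb & _).
  destruct hedge_rates as (Hp & _).
  unfold Acoef, trail_ratio, trail_rate, lead_rate in *.
  change (tan beta) with (sin beta / cos beta).
  assert (0 < tan alpha + sin beta / cos beta).
  { assert (0 <= sin beta / cos beta) by (apply Rdiv_le_0_compat; lra). lra. }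
  field. lra.
Qed.

Lemma one_add_trail_ratio :
  (1 + trail_ratio alpha beta) * lead_rate alpha beta = 2 * tan alpha * cos beta.
Proof.
  destruct hedge_rates as (Hp & _).
  unfold trail_ratio, trail_rate, lead_rate in *. field. lra.
Qed.

Lemma Acoef_Bcoef_bounds :
  0 <= Acoef alpha beta <= 1 /\ -2 < Bcoef alpha < 2 /\
  0 < 2 - Acoef alpha beta * Bcoef alpha.
Proof.
  destruct hedge_rates as (_ & _ & Hk). pose proof (Bcoef_bounds alpha Halpha) as HB.
  rewrite Acoef_trail_ratio.
  assert (HA : 0 <= 1 - trail_ratio alpha beta <= 1) by lra.
  repeat split; try lra.
  destruct (Rle_lt_dec 0 (Bcoef alpha)); nra.
Qed.

Lemma hedge_step_right F lo hi y p p' :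
  0 < y -> (forall q, F q <-> covers alpha lo hi q) ->
  0 <= snd p -> lend alpha p <= lo -> rend alpha p < hi ->
  (hedge_step beta F y p p' <->
   p' = hedge_move beta y p ((hi - rend alpha p) / lead_rate alpha beta)).
Proof.
  intros Hy HF Hv Hlo Hhi. destruct hedge_rates as (Hp & Hq & _).
  apply hedge_step_threshold; [rewrite HF; unfold covers; lra | lra | exact Hp |].
  intros s Hs. rewrite HF. unfold covers.
  destruct (ends_hedge_move_right alpha beta y p s Hy) as [-> ->].
  unfold hedge_move; cbn [snd].
  destruct hedge_trig_signs as (_ & _ & _ & _ & Hcb & _).
  split; [lra | intros; repeat split; nra].
Qed.

Lemma hedge_step_left F lo hi y p p' :
  y < 0 -> (forall q, F q <-> covers alpha lo hi q) ->
  0 <= snd p -> hi <= rend alpha p -> lo < lend alpha p ->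
  (hedge_step beta F y p p' <->
   p' = hedge_move beta y p ((lend alpha p - lo) / lead_rate alpha beta)).
Proof.
  intros Hy HF Hv Hhi Hlo. destruct hedge_rates as (Hp & Hq & _).
  apply hedge_step_threshold; [rewrite HF; unfold covers; lra | lra | exact Hp |].
  intros s Hs. rewrite HF. unfold covers.
  destruct (ends_hedge_move_left alpha beta y p s Hy) as [-> ->].
  unfold hedge_move; cbn [snd].
  destruct hedge_trig_signs as (_ & _ & _ & _ & Hcb & _).
  split; [lra | intros; repeat split; nra].
Qed.

Lemma hedge_inv_step_right F lo r y p p' :
  hedge_inv (trail_ratio alpha beta) (lend alpha p) (rend alpha p) (- lo) r -> r < y ->
  (forall q, F q <-> covers alpha lo y q) -> hedge_step beta F y p p' ->
  hedge_inv (trail_ratio alpha beta) (lend alpha p') (rend alpha p') (- lo) y /\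
  snd p' = snd p + dist p p' * cos beta.
Proof.
  intros HI Hr HF Hstep. destruct hedge_rates as (Hp & Hq & Hk).
  pose proof HI as (Hlo & Hhi & Hl0 & Hr0 & _). rewrite Ropp_involutive in Hlo.
  assert (Hv : 0 <= snd p) by (apply (snd_nonneg_of_lend_le_rend alpha Halpha); lra).
  destruct (Rle_lt_dec y (rend alpha p)) as [Hin | Hout].
  - apply hedge_step_stay in Hstep as ->; [| rewrite HF; unfold covers; lra].
    rewrite dist_self. split; [| ring].
    apply hedge_inv_extend_right with r; lra || assumption.
  - apply (hedge_step_right F lo y y p p') in Hstep as ->; try lra; [| assumption].
    set (s := (y - rend alpha p) / lead_rate alpha beta).
    assert (Hs : 0 <= s) by (apply Rdiv_le_0_compat; lra).
    destruct (ends_hedge_move_right alpha beta y p s ltac:(lra)) as [-> ->].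
    rewrite dist_hedge_move by lra. split; [| reflexivity].
    replace (lend alpha p - s * trail_rate alpha beta)
      with (lend alpha p - trail_ratio alpha beta * (y - rend alpha p))
      by (unfold s, trail_ratio; field; lra).
    replace (rend alpha p + s * lead_rate alpha beta) with y by (unfold s; field; lra).
    apply hedge_inv_grow_right with r; lra || assumption.
Qed.

Lemma hedge_inv_step_left F l hi y p p' :
  hedge_inv (trail_ratio alpha beta) (lend alpha p) (rend alpha p) l hi -> y < - l ->
  (forall q, F q <-> covers alpha y hi q) -> hedge_step beta F y p p' ->
  hedge_inv (trail_ratio alpha beta) (lend alpha p') (rend alpha p') (- y) hi /\
  snd p' = snd p + dist p p' * cos beta.
Proof.
  intros HI Hl HF Hstep. destruct hedge_rates as (Hp & Hq & Hk).
  pose proof HI as (Hlo & Hhi & Hl0 & Hr0 & _).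
  assert (Hv : 0 <= snd p) by (apply (snd_nonneg_of_lend_le_rend alpha Halpha); lra).
  destruct (Rle_lt_dec (lend alpha p) y) as [Hin | Hout].
  - apply hedge_step_stay in Hstep as ->; [| rewrite HF; unfold covers; lra].
    rewrite dist_self. split; [| ring].
    apply hedge_inv_extend_left with l; lra || assumption.
  - apply (hedge_step_left F y hi y p p') in Hstep as ->; try lra; [| assumption].
    set (s := (lend alpha p - y) / lead_rate alpha beta).
    assert (Hs : 0 <= s) by (apply Rdiv_le_0_compat; lra).
    destruct (ends_hedge_move_left alpha beta y p s ltac:(lra)) as [-> ->].
    rewrite dist_hedge_move by lra. split; [| reflexivity].
    replace (lend alpha p - s * lead_rate alpha beta) with (- - y) by (unfold s; field; lra).
    replace (rend alpha p + s * trail_rate alpha beta)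
      with (rend alpha p + trail_ratio alpha beta * (lend alpha p + - y))
      by (unfold s, trail_ratio; field; lra).
    apply hedge_inv_grow_left with l; lra || assumption.
Qed.

Lemma hedge_traj_inv n x P : good_input n x -> hedge_traj alpha beta n x P ->
  forall i, (i <= n)%nat ->
    path_cost P i * cos beta = snd (P i) /\
    hedge_inv (trail_ratio alpha beta) (lend alpha (P i)) (rend alpha (P i))
      (- xmin x i) (xmax x i).
Proof.
  intros Hg [HP0 Hsteps]. pose proof Hg as (_ & Hx0 & _).
  induction i as [| i IH]; intros Hi.
  - rewrite HP0. cbn [path_cost xmin xmax]. rewrite Hx0, Ropp_0.
    destruct (ends_origin alpha) as [-> ->].
    split; [simpl; ring | apply hedge_inv_0].
  - destruct (IH ltac:(lia)) as [Hcost HI]. specialize (Hsteps i Hi).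
    pose proof (inFC_upto_covers alpha x (S i)) as HF.
    cbn [path_cost]. rewrite Rmult_plus_distr_r, Hcost.
    pose proof (xmin_le_0 x i Hx0). pose proof (xmax_ge_0 x i Hx0).
    destruct (good_input_new_extreme n x i Hg Hi) as [Hl | Hr].
    + assert (Emin : xmin x (S i) = x (S i)) by (simpl; apply Rmin_right; lra).
      assert (Emax : xmax x (S i) = xmax x i) by (simpl; apply Rmax_left; lra).
      rewrite Emin, Emax in HF |- *.
      destruct (hedge_inv_step_left _ _ _ (x (S i)) _ _ HI ltac:(lra) HF Hsteps) as [HI' Hv'].
      split; [lra | exact HI'].
    + assert (Emin : xmin x (S i) = xmin x i) by (simpl; apply Rmin_left; lra).
      assert (Emax : xmax x (S i) = x (S i)) by (simpl; apply Rmax_right; lra).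
      rewrite Emin, Emax in HF |- *.
      destruct (hedge_inv_step_right _ _ _ _ _ _ HI Hr HF Hsteps) as [HI' Hv'].
      split; [lra | exact HI'].
Qed.

Lemma hedge_cost_bound n x P : good_input n x -> hedge_traj alpha beta n x P ->
  0 < path_cost P n /\
  path_cost P n * lead_rate alpha beta <= 1 + Acoef alpha beta * xmax x n.
Proof.
  intros Hg Ht. destruct (good_input_hull n x Hg) as [Emin HM].
  destruct (hedge_traj_inv n x P Hg Ht n (le_n n)) as [Hcost HI].
  rewrite Emin in HI. replace (- -1) with 1 in HI by ring.
  destruct hedge_trig_signs as (_ & _ & Hta & _ & Hcb & _).
  destruct hedge_rates as (Hp & _ & Hk).
  pose proof (hedge_inv_width _ Hk _ _ _ (proj2 HM) HI) as Hw.
  pose proof HI as (Hlo & Hhi & _).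
  assert (Hwidth : rend alpha (P n) - lend alpha (P n) =
                   2 * (tan alpha * cos beta) * path_cost P n)
    by (unfold lend, rend; rewrite <- Hcost; ring).
  assert (0 < tan alpha * cos beta) by (apply Rmult_lt_0_compat; lra).
  split; [nra |].
  apply (Rmult_le_reg_l (1 + trail_ratio alpha beta)); [lra |].
  rewrite Acoef_trail_ratio.
  replace ((1 + trail_ratio alpha beta) * (path_cost P n * lead_rate alpha beta))
    with ((1 + trail_ratio alpha beta) * lead_rate alpha beta * path_cost P n) by ring.
  rewrite one_add_trail_ratio. lra.
Qed.

Lemma f1_cone_form r : f1 alpha beta r =
  2 * sin alpha / lead_rate alpha beta *
  ((1 + Acoef alpha beta * r) / sqrt (cone_form (Bcoef alpha) 1 r)).
Proof.
  destruct hedge_trig_signs as (Hsa & Hca & _ & Hsb & Hcb & _).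
  assert (0 < sin beta * cos alpha + sin alpha * cos beta) by nra.
  unfold f1, Acoef, Bcoef, cone_form.
  replace (1 ^ 2 + r ^ 2 + 2 * cos (2 * alpha) * 1 * r)
    with (1 + r ^ 2 + 2 * cos (2 * alpha) * r) by ring.
  f_equal. unfold lead_rate, tan. field. repeat split; lra.
Qed.

Lemma r0_spec :
  r0 alpha beta * (2 - Acoef alpha beta * Bcoef alpha) = 2 * Acoef alpha beta - Bcoef alpha.
Proof.
  destruct Acoef_Bcoef_bounds as (_ & _ & HAB).
  change (r0 alpha beta) with
    ((2 * Acoef alpha beta - Bcoef alpha) / (2 - Acoef alpha beta * Bcoef alpha)).
  field. lra.
Qed.

Lemma hedge_ratio_le n x P opt : Bcoef alpha <= 2 * Acoef alpha beta ->
  good_input n x -> hedge_traj alpha beta n x P -> is_OPT alpha n x opt ->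
  path_cost P n / opt <= f1 alpha beta (r0 alpha beta).
Proof.
  intros HBA Hg Ht Hopt.
  destruct hedge_trig_signs as (Hsa & _).
  destruct hedge_rates as (Hp & _).
  destruct Acoef_Bcoef_bounds as (HA & HB & HAB).
  destruct (r0_bounds _ _ _ HA HB HBA r0_spec) as ((Hr0 & _) & _).
  destruct (hedge_cost_bound n x P Hg Ht) as [Hcost_pos Hcost].
  destruct (good_input_hull n x Hg) as [Emin HM].
  destruct (xmin_spec x n) as [_ [jm [Hjm Ejm]]], (xmax_spec x n) as [_ [jM [HjM EjM]]].
  set (A := Acoef alpha beta) in *. set (B := Bcoef alpha) in *.
  set (r := r0 alpha beta) in *. set (M := xmax x n) in *.
  set (S0 := sqrt (cone_form B 1 r)).
  assert (HS0 : 0 < S0) by (apply sqrt_lt_R0, cone_form_1_pos, HB).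
  assert (HF : f1 alpha beta r = 2 * sin alpha / lead_rate alpha beta * ((1 + A * r) / S0))
    by apply f1_cone_form.
  apply (glb_ratio_le _ _ _ _ Hopt Hcost_pos).
  - rewrite HF. apply Rmult_lt_0_compat; apply Rdiv_lt_0_compat; nra.
  - intros c [Q [HQ ->]].
    pose proof (solution_sees_request alpha n x Q jm HQ Hjm).
    pose proof (solution_sees_request alpha n x Q jM HQ HjM).
    pose proof (solution_cost_ge alpha Halpha n x Q HQ) as Hsol.
    pose proof (cone_form_ratio_le A B r M (- lend alpha (Q n)) (rend alpha (Q n))
                  HA ltac:(lra) HAB r0_spec Hr0 ltac:(lra) ltac:(lra)) as Hcore.
    fold S0 in Hcore.
    apply (Rmult_le_reg_r (lead_rate alpha beta * S0)); [nra |].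
    replace (f1 alpha beta r * path_cost Q n * (lead_rate alpha beta * S0))
      with ((1 + A * r) * (2 * sin alpha * path_cost Q n)) by (rewrite HF; field; lra).
    assert (path_cost P n * lead_rate alpha beta * S0 <= (1 + A * M) * S0)
      by (apply Rmult_le_compat_r; lra).
    assert ((1 + A * r) * sqrt (cone_form B (- lend alpha (Q n)) (rend alpha (Q n))) <=
            (1 + A * r) * (2 * sin alpha * path_cost Q n))
      by (apply Rmult_le_compat_l; [nra | exact Hsol]).
    lra.
Qed.

Lemma hedge_ratios_f1 n x P : good_input n x -> hedge_traj alpha beta n x P ->
  0 <= 2 * xmax x n + Bcoef alpha ->
  path_cost P n * lead_rate alpha beta = 1 + Acoef alpha beta * xmax x n ->
  hedge_ratios alpha beta (f1 alpha beta (xmax x n)).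
Proof.
  intros Hg Ht HMB Hcost.
  destruct hedge_trig_signs as (Hsa & _). destruct hedge_rates as (Hp & _).
  pose proof (cone_form_1_pos _ (xmax x n) (Bcoef_bounds alpha Halpha)) as Hcf.
  pose proof (sqrt_lt_R0 _ Hcf).
  exists n, x, P, (sqrt (cone_form (Bcoef alpha) 1 (xmax x n)) / (2 * sin alpha)).
  split; [exact Hg |]. split; [exact Ht |]. split.
  - apply good_input_OPT; assumption.
  - rewrite f1_cone_form.
    replace (path_cost P n) with ((1 + Acoef alpha beta * xmax x n) / lead_rate alpha beta)
      by (rewrite <- Hcost; field; lra).
    field. lra.
Qed.

Definition two_sided_input (M : R) (j : nat) : R :=
  match j with O => 0 | 1%nat => M | _ => -1 end.

Definition left_input (j : nat) : R := match j with O => 0 | _ => -1 end.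

Definition two_sided_run (alpha beta M : R) (j : nat) : pt :=
  let p1 := hedge_move beta M (0, 0) (M / lead_rate alpha beta) in
  match j with
  | O => (0, 0)
  | 1%nat => p1
  | _ => hedge_move beta (-1) p1 ((1 - trail_ratio alpha beta * M) / lead_rate alpha beta)
  end.

Definition left_run (alpha beta : R) (j : nat) : pt :=
  match j with O => (0, 0) | _ => hedge_move beta (-1) (0, 0) (1 / lead_rate alpha beta) end.

Lemma two_sided_input_good M : 0 < M <= 1 -> good_input 2 (two_sided_input M).
Proof.
  intros HM. split; [lia |]. split; [reflexivity |]. split; [| split].
  - intros i Hi (a & b & Ha & Hb & Hab).
    destruct i as [| [| [| i]]]; try lia;
      destruct a as [| [| a]]; try lia; destruct b as [| [| b]]; try lia; simpl in Hab; lra.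
  - split; [intros j Hj; destruct j as [| [| j]]; simpl; lra |].
    exists 2%nat. split; [lia | reflexivity].
  - exists M. split; [lra |]. split.
    + intros j Hj. destruct j as [| [| j]]; simpl; lra.
    + exists 1%nat. split; [lia | reflexivity].
Qed.

Lemma left_input_good : good_input 1 left_input.
Proof.
  split; [lia |]. split; [reflexivity |]. split; [| split].
  - intros i Hi (a & b & Ha & Hb & Hab).
    destruct i as [| [| i]]; try lia. destruct a as [| a]; [simpl in Hab; lra | lia].
  - split; [intros j Hj; destruct j as [| j]; simpl; lra |].
    exists 1%nat. split; [lia | reflexivity].
  - exists 0. split; [lra |]. split.
    + intros j Hj. destruct j as [| j]; simpl; lra.
    + exists O. split; [lia | reflexivity].
Qed.

Lemma hedge_ratios_two_sided M : 0 < M <= 1 -> trail_ratio alpha beta * M < 1 ->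
  0 <= 2 * M + Bcoef alpha -> hedge_ratios alpha beta (f1 alpha beta M).
Proof.
  intros HM HkM HMB. destruct hedge_rates as (Hp & Hq & Hk).
  destruct hedge_trig_signs as (_ & _ & _ & _ & Hcb & _).
  set (x := two_sided_input M). set (P := two_sided_run alpha beta M).
  set (s1 := M / lead_rate alpha beta).
  set (s2 := (1 - trail_ratio alpha beta * M) / lead_rate alpha beta).
  assert (Hs1 : 0 <= s1) by (apply Rdiv_le_0_compat; lra).
  assert (Hs2 : 0 <= s2) by (apply Rdiv_le_0_compat; lra).
  assert (Exmax : xmax x 2 = M)
    by (simpl; rewrite (Rmax_right 0 M) by lra; apply Rmax_left; lra).
  destruct (ends_origin alpha) as [Elo0 Ehi0].
  destruct (ends_hedge_move_right alpha beta M (0, 0) s1 ltac:(lra)) as [Elo1 Ehi1].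
  rewrite Elo0 in Elo1. rewrite Ehi0 in Ehi1.
  assert (EP1 : P 1%nat = hedge_move beta M (0, 0) s1) by reflexivity.
  assert (EP2 : P 2%nat = hedge_move beta (-1) (P 1%nat) s2) by reflexivity.
  assert (Ht : hedge_traj alpha beta 2 x P).
  { split; [reflexivity |]. intros k Hk2. destruct k as [| [| k]]; [| | lia].
    - change (hedge_step beta (inFC_upto alpha x 1) M (0, 0) (P 1%nat)).
      apply (hedge_step_right _ 0 M); try (cbn; lra).
      + intros q. rewrite inFC_upto_covers. simpl. rewrite Rmin_left, Rmax_right by lra. tauto.
      + rewrite Ehi0, Rminus_0_r. reflexivity.
    - change (hedge_step beta (inFC_upto alpha x 2) (-1) (P 1%nat) (P 2%nat)).
      apply (hedge_step_left _ (-1) M); try lra.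
      + intros q. rewrite inFC_upto_covers, Exmax. simpl.
        rewrite (Rmin_left 0 M), Rmin_right by lra. tauto.
      + rewrite EP1. unfold hedge_move; cbn [snd]. nra.
      + rewrite EP1, Ehi1. unfold s1. field_simplify; lra.
      + rewrite EP1, Elo1.
        replace (s1 * trail_rate alpha beta) with (trail_ratio alpha beta * M)
          by (unfold s1, trail_ratio; field; lra).
        lra.
      + rewrite EP2, EP1, Elo1. f_equal. unfold s1, s2, trail_ratio. field. lra. }
  rewrite <- Exmax.
  apply hedge_ratios_f1 with P; [apply two_sided_input_good; lra | exact Ht | lra |].
  change (path_cost P 2) with (0 + dist (0, 0) (P 1%nat) + dist (P 1%nat) (P 2%nat)).
  rewrite EP2, EP1, !dist_hedge_move by lra. rewrite Exmax, Acoef_trail_ratio.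
  unfold s1, s2. field. lra.
Qed.

Lemma hedge_ratios_left : 0 <= Bcoef alpha -> hedge_ratios alpha beta (f1 alpha beta 0).
Proof.
  intros HB. destruct hedge_rates as (Hp & _).
  set (s := 1 / lead_rate alpha beta).
  assert (Hs : 0 <= s) by (apply Rdiv_le_0_compat; lra).
  assert (Exmax : xmax left_input 1 = 0) by (simpl; apply Rmax_left; lra).
  destruct (ends_origin alpha) as [Elo0 Ehi0].
  assert (Ht : hedge_traj alpha beta 1 left_input (left_run alpha beta)).
  { split; [reflexivity |]. intros k Hk1. destruct k as [| k]; [| lia].
    change (hedge_step beta (inFC_upto alpha left_input 1) (-1) (0, 0) (left_run alpha beta 1)).
    apply (hedge_step_left _ (-1) 0); try (cbn; lra).
    - intros q. rewrite inFC_upto_covers, Exmax. simpl. rewrite Rmin_right by lra. tauto.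
    - rewrite Elo0. cbn. f_equal. unfold s. field. lra. }
  rewrite <- Exmax. apply hedge_ratios_f1 with (left_run alpha beta);
    [exact left_input_good | exact Ht | lra |].
  change (path_cost (left_run alpha beta) 1)
    with (0 + dist (0, 0) (hedge_move beta (-1) (0, 0) s)).
  rewrite dist_hedge_move by lra. rewrite Exmax. unfold s. field. lra.
Qed.

End HedgeGeometry.

Lemma t_fun_eq alpha : 0 < alpha < PI / 2 ->
  t_fun alpha =
  atan ((cos alpha ^ 2 - sin alpha ^ 2) * tan alpha / (cos alpha ^ 2 + 3 * sin alpha ^ 2)).
Proof.
  intros Ha. destruct (cone_trig_signs alpha Ha) as (Hs & Hc & _).
  pose proof (sin2_cos2 alpha) as E. unfold Rsqr in E.
  unfold t_fun. f_equal.
  replace (3 * alpha) with (2 * alpha + alpha) by ring.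
  rewrite sin_plus, cos_plus, sin_2a, cos_2a.
  replace (2 * sin alpha * cos alpha * cos alpha +
           (cos alpha * cos alpha - sin alpha * sin alpha) * sin alpha - sin alpha)
    with (2 * sin alpha * (cos alpha ^ 2 - sin alpha ^ 2)) by nra.
  replace (3 * cos alpha - ((cos alpha * cos alpha - sin alpha * sin alpha) * cos alpha -
           2 * sin alpha * cos alpha * sin alpha))
    with (2 * cos alpha * (cos alpha ^ 2 + 3 * sin alpha ^ 2)) by nra.
  unfold tan. field. split; nra.
Qed.

Lemma Bcoef_le_twice_Acoef alpha beta : 0 < alpha < PI / 2 -> 0 <= beta <= alpha ->
  (cos alpha ^ 2 - sin alpha ^ 2) * tan alpha / (cos alpha ^ 2 + 3 * sin alpha ^ 2) <= tan beta ->
  Bcoef alpha <= 2 * Acoef alpha beta.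
Proof.
  intros Ha Hb Htb.
  destruct (hedge_trig_signs alpha beta Ha Hb) as (Hsa & Hca & Hta & Hsb & Hcb & _).
  pose proof (sin2_cos2 alpha) as E. unfold Rsqr in E.
  assert (Htb0 : 0 <= tan beta) by (unfold tan; apply Rdiv_le_0_compat; lra).
  assert (HD : 0 < cos alpha ^ 2 + 3 * sin alpha ^ 2) by nra.
  apply (Rmult_le_compat_r (cos alpha ^ 2 + 3 * sin alpha ^ 2)) in Htb; [| lra].
  replace ((cos alpha ^ 2 - sin alpha ^ 2) * tan alpha / (cos alpha ^ 2 + 3 * sin alpha ^ 2) *
           (cos alpha ^ 2 + 3 * sin alpha ^ 2))
    with ((cos alpha ^ 2 - sin alpha ^ 2) * tan alpha) in Htb by (field; lra).
  unfold Bcoef, Acoef. rewrite cos_2a.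
  apply (Rmult_le_reg_r (tan alpha + tan beta)); [lra |].
  replace (2 * (2 * tan beta / (tan alpha + tan beta)) * (tan alpha + tan beta))
    with (4 * tan beta) by (field; lra).
  nra.
Qed.

Lemma parameter_region alpha beta :
  ((0 < alpha <= PI / 4 /\ t_fun alpha <= beta <= alpha) \/
   (PI / 4 <= alpha < PI / 2 /\ 0 <= beta <= alpha)) ->
  0 < alpha < PI / 2 /\ 0 <= beta <= alpha /\ Bcoef alpha <= 2 * Acoef alpha beta.
Proof.
  pose proof PI_RGT_0.
  intros [[Ha [Ht Hb]] | [Ha Hb]].
  - assert (Ha' : 0 < alpha < PI / 2) by lra.
    destruct (cone_trig_signs alpha Ha') as (Hs & Hc & Hta).
    rewrite (t_fun_eq alpha Ha') in Ht.
    set (Q := (cos alpha ^ 2 - sin alpha ^ 2) * tan alpha / (cos alpha ^ 2 + 3 * sin alpha ^ 2))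
      in *.
    assert (HQ : 0 <= Q).
    { pose proof (cos_ge_0 (2 * alpha) ltac:(lra) ltac:(lra)) as Hc2. rewrite cos_2a in Hc2.
      apply Rdiv_le_0_compat; nra. }
    assert (Hat : 0 <= atan Q).
    { rewrite <- atan_0. destruct HQ as [HQ | <-]; [left; apply atan_increasing, HQ | lra]. }
    assert (Hb' : 0 <= beta <= alpha) by lra.
    assert (HtQ : Q <= tan beta) by (rewrite <- (tan_atan Q) at 1; apply tan_incr_1; lra).
    repeat split; try lra.
    apply Bcoef_le_twice_Acoef; [exact Ha' | exact Hb' | exact HtQ].
  - assert (Ha' : 0 < alpha < PI / 2) by lra.
    destruct (Acoef_Bcoef_bounds alpha beta Ha' Hb) as (HA & _).
    assert (cos (2 * alpha) <= 0) by (apply cos_le_0; lra).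
    unfold Bcoef. repeat split; lra.
Qed.

Theorem lemma8 (alpha beta : R) :
  ((0 < alpha <= PI / 4 /\ t_fun alpha <= beta <= alpha) \/
   (PI / 4 <= alpha < PI / 2 /\ 0 <= beta <= alpha)) ->
  hedge_competitive_ratio alpha beta (f1 alpha beta (r0 alpha beta)).
Proof.
  intros Hreg. destruct (parameter_region alpha beta Hreg) as (Ha & Hb & HBA).
  destruct (Acoef_Bcoef_bounds alpha beta Ha Hb) as (HA & HB & _).
  destruct (r0_bounds _ _ _ HA HB HBA (r0_spec alpha beta Ha Hb)) as (Hr & HrB & Hkr).
  rewrite (Acoef_trail_ratio alpha beta Ha Hb) in Hkr.
  split.
  - intros q (n & x & P & opt & Hg & Ht & Hopt & ->).
    exact (hedge_ratio_le alpha beta Ha Hb n x P opt HBA Hg Ht Hopt).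
  - intros b Hub. apply Hub.
    destruct (Req_dec (r0 alpha beta) 0) as [Hz | Hz].
    + rewrite Hz in HrB |- *. apply hedge_ratios_left; lra.
    + apply hedge_ratios_two_sided; lra.
Qed.
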